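(* For every decorated tree $\mathcal{T}$, the integer $M(\mathcal{T}) + F(\mathcal{T})$ is even.
   Context: A graph is a pair $(X_0,X_1)$ of finite sets such that each element of $X_1$ (an edge) is a $2$-element subset of $X_0$; elements of $X_0$ are called cells. The valency $\delta_x$ of a cell $x$ is the number of edges containing $x$. A path is a tuple $(x_0,\dots,x_n)$ ($n\ge 0$) of cells such that $\{x_i,x_{i+1}\}$ is an edge for each $i<n$ and these $n$ edges are pairwise distinct; a cell (resp. edge) is in the path if it is one of the $x_i$ (resp. one of the $\{x_i,x_{i+1}\}$). The graph is a tree if for any cells $x,y$ there is a unique path from $x$ to $y$, denoted $\gamma_{x,y}$. A decorated tree is a $5$-tuple $\mathcal{T}=(V,A,E,f,q)$ where $V$ (vertices) and $A$ (arrows) are finite disjoint sets, $(V\cup A,E)$ is a tree, every arrow has valency $1$, $f:A\to\mathbb{Z}$ is a map, $q$ assigns an integer $q(e,x)$ (the decoration of $e$ near $x$) to each pair $(e,x)$ with $e\in E$, $x\in e$, such that $q(e,\alpha)=1$ whenever $\alpha\in A$, and for every $v\in V$ and distinct edges $e,e'$ containing $v$, $\gcd(q(e,v),q(e',v))=1$. Let $A_0=\{\alpha\in A: f(\alpha)=0\}$. For $x\in V\cup A$ and an edge $e\ni x$, $Q(e,x)=\prod q(e',x)$ over edges $e'\neq e$ containing $x$ (empty products equal $1$). An edge $\varepsilon$ is incident to a path $\gamma$ if $\varepsilon$ is not in $\gamma$ but contains some cell $u$ of $\gamma$; then $q(\varepsilon,\gamma):=q(\varepsilon,u)$. For $v\in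 V\cup A$ and $\alpha\in A$ with $v\ne\alpha$, $x_{v,\alpha}=f(\alpha)\prod_\varepsilon q(\varepsilon,\gamma_{v,\alpha})$ over all edges $\varepsilon$ incident to $\gamma_{v,\alpha}$, and $\hat x_{v,\alpha}$ is the same expression with the product restricted to those $\varepsilon$ not containing $v$. For $v\in V\cup A_0$, $N_v=\sum_{\alpha\in A\setminus A_0} x_{v,\alpha}$, and $M(\mathcal{T})=-\sum_{v\in V\cup A_0}N_v(\delta_v-2)$. For $u\in V\cup A$ and an edge $e\ni u$, $p(u,e)=\sum \hat x_{u,\alpha}$ over $\alpha\in A\setminus A_0$ such that $e$ is in $\gamma_{u,\alpha}$. For $\alpha\in A\setminus A_0$ with unique incident edge $e_\alpha$, $F(\alpha)=\gcd(f(\alpha),p(\alpha,e_\alpha))\ge 0$, and $F(\mathcal{T})=\sum_{\alpha\in A\setminus A_0}F(\alpha)$. *)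

From HB Require Import structures.
From mathcomp Require Import all_boot all_order all_algebra.
Set Implicit Arguments. Unset Strict Implicit. Unset Printing Implicit Defensive.
Import Order.TTheory GRing.Theory Num.Theory.
Local Open Scope ring_scope.

Section Graphs.
Variable T : finType.
Implicit Types (E : {set {set T}}) (p : seq T).

Definition pedges p : seq {set T} :=
  if p is x :: s then pairmap (fun a b => [set a; b]) x s else [::].

Definition is_path_from E (x y : T) p : bool :=
  if p is x0 :: s then
    [&& x0 == x, last x0 s == y, all (fun e => e \in E) (pedges p)
      & uniq (pedges p)]
  else false.

Definition is_tree E : Prop :=
  forall x y : T, (exists p, is_path_from E x y p) /\
    (forall p p', is_path_from E x y p -> is_path_from E x y p' -> p = p').

Definition valency E (x : T) : nat := #|[set e in E | x \in e]|.

End Graphs.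

(* A decorated tree whose set of cells is the finite type T; the arrows are
   the set dA and the vertices are its complement. *)
Record dtree (T : finType) := DTree {
  dA : {set T};
  dE : {set {set T}};
  df : T -> int;
  dq : {set T} -> T -> int;
  dE_two : forall e, e \in dE -> #|e| = 2%N;
  d_is_tree : is_tree dE;
  d_arrow_leaf : forall a, a \in dA -> valency dE a = 1%N;
  d_q_arrow : forall e a, e \in dE -> a \in e -> a \in dA -> dq e a = 1;
  d_q_coprime : forall v e e', v \notin dA -> e \in dE -> e' \in dE ->
    e != e' -> v \in e -> v \in e' -> gcdz (dq e v) (dq e' v) = 1
}.

Section Invariants.
Variables (T : finType) (D : dtree T).
(* gamma x y is (the) path from x to y; it is unique since D is a tree. *)
Variable gamma : T -> T -> seq T.

Definition dV : {set T} := ~: dA D.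
Definition dA0 : {set T} := [set a in dA D | df D a == 0].
Definition dA1 : {set T} := dA D :\: dA0.
Definition delta (x : T) : int := (valency (dE D) x)%:Z.

Definition incident (eps : {set T}) (p : seq T) : bool :=
  (eps \in dE D) && (eps \notin pedges p) && has (fun u => u \in eps) p.

Definition qpath (eps : {set T}) (p : seq T) : int :=
  if [pick u | (u \in eps) && (u \in p)] is Some u then dq D eps u else 1.

Definition xva (v a : T) : int :=
  df D a * \prod_(eps in dE D | incident eps (gamma v a)) qpath eps (gamma v a).

Definition xhat (v a : T) : int :=
  df D a * \prod_(eps in dE D | incident eps (gamma v a) && (v \notin eps))
              qpath eps (gamma v a).

Definition Nv (v : T) : int := \sum_(a in dA1) xva v a.

Definition Minv : int := - \sum_(v in dV :|: dA0) Nv v * (delta v - 2).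

Definition pue (u : T) (e : {set T}) : int :=
  \sum_(a in dA1 | e \in pedges (gamma u a)) xhat u a.

Definition arrow_edge (a : T) : {set T} :=
  if [pick e in dE D | a \in e] is Some e then e else set0.

Definition Falpha (a : T) : int := gcdz (df D a) (pue a (arrow_edge a)).

Definition Finv : int := \sum_(a in dA1) Falpha a.

End Invariants.

(* Work modulo 2.  Fix an arrow alpha and orient the tree towards it.  The edges at a
   cell c that are not on the path to alpha join c to its children; x_{c,alpha} is
   xhat_{c,alpha} times the decorations at c of all these edges, and xhat_{d,alpha} for a
   child d is xhat_{c,alpha} times those of the other ones.  At most one of these
   decorations is even (coprimality), and they are all 1 when c is an arrow, whence
     delta_c x_{c,alpha} + sum_{children d} xhat_{d,alpha} = [c <> alpha] xhat_{c,alpha}.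
   Every cell other than alpha has exactly one parent, so summing over c gives
   sum_c delta_c x_{c,alpha} = 0.  Finally delta = 1 and x_{alpha,alpha} = f(alpha) at an
   arrow, gcd(a, b) = a + b + ab, p(alpha, e_alpha) = sum_{beta <> alpha} x_{alpha,beta}
   and f(alpha) x_{alpha,beta} = f(beta) x_{beta,alpha}, so the products f p cancel in
   pairs and M + F reduces to twice sum_alpha f(alpha). *)

From HB Require Import structures.
From mathcomp Require Import all_boot all_order all_algebra.
Import Order.TTheory GRing.Theory Num.Theory.
Set Implicit Arguments. Unset Strict Implicit. Unset Printing Implicit Defensive.

Section Paths.
Variables (T : finType) (E : {set {set T}}).
Implicit Types (x y z : T) (p s : seq T) (e : {set T}).

Lemma pedges_cons2 x y s : pedges [:: x, y & s] = [set x; y] :: pedges (y :: s).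
Proof. by []. Qed.

Lemma pedges_sub p e : e \in pedges p -> {subset e <= p}.
Proof.
elim: p => [|x [|y s] IH] //; rewrite pedges_cons2 inE => /orP[/eqP-> z | /IH sub z /sub].
  by rewrite !inE => /orP[]->; rewrite ?orbT.
exact: (@mem_behead _ [:: x, y & s]).
Qed.

Lemma mem_pedges_behead p e : e \in pedges (behead p) -> e \in pedges p.
Proof. by case: p => [|x [|y s]] //= ep; rewrite inE ep orbT. Qed.

Lemma mem_pedges_drop n p e : e \in pedges (drop n p) -> e \in pedges p.
Proof.
elim: n p => [|n IH] p; first by rewrite drop0.
by case: p => [|x s] //= /IH; apply: (@mem_pedges_behead (x :: s)).
Qed.

Lemma pedges_rcons p z : (0 < size p)%N ->
  pedges (rcons p z) = rcons (pedges p) [set last z p; z].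
Proof. by case: p => // x s _ /=; rewrite -cats1 pairmap_cat cats1. Qed.

Lemma pedges_rev p : pedges (rev p) = rev (pedges p).
Proof.
elim: p => [|x [|y s] IH] //.
rewrite rev_cons pedges_rcons ?size_rev // IH pedges_cons2 !rev_cons.
by rewrite last_rcons setUC.
Qed.

Lemma path_from_head x y p : is_path_from E x y p -> p = x :: behead p.
Proof. by case: p => //= x0 s /and4P[/eqP-> _ _ _]. Qed.

Lemma path_from_edge x y p e : is_path_from E x y p -> e \in pedges p -> e \in E.
Proof. by case: p => // z s /and4P[_ _ /allP + _]; apply. Qed.

Lemma path_from_uniq_edges x y p : is_path_from E x y p -> uniq (pedges p).
Proof. by case: p => // z s /and4P[]. Qed.

Lemma path_from_behead x y z0 z s :
  is_path_from E x y [:: z0, z & s] -> is_path_from E z y (z :: s).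
Proof.
rewrite /is_path_from pedges_cons2 /= => /and4P[_ -> /andP[_ ->] /andP[_ ->]].
by rewrite eqxx.
Qed.

Lemma path_from_cons x z y p : is_path_from E z y p -> [set x; z] \in E ->
  [set x; z] \notin pedges p -> is_path_from E x y (x :: p).
Proof.
case: p => // z0 s /and4P[/eqP-> yl pE pu] xzE xzp.
by rewrite /is_path_from pedges_cons2 /= eqxx yl xzE pE xzp pu.
Qed.

Lemma path_from_drop d n x y p : is_path_from E x y p -> (n < size p)%N ->
  is_path_from E (nth d p n) y (drop n p).
Proof.
elim: n x p => [|n IH] x p.
  case: p => // z s pxy _.
  have zx : z = x by case/and4P: pxy => /eqP.
  by rewrite zx in pxy *.
case: p => [|z0 [|z s]] // pxy n_lt.
exact: IH (path_from_behead pxy) n_lt.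
Qed.

Lemma path_from_rev x y p : is_path_from E x y p -> is_path_from E y x (rev p).
Proof.
case: p => // z s /and4P[/eqP-> /eqP yl]; rewrite -all_rev -rev_uniq -!pedges_rev.
have -> : rev (x :: s) = y :: rev (belast x s) by rewrite lastI rev_rcons yl.
move=> pE pu; rewrite /is_path_from eqxx pE pu !andbT.
by case: s yl {pE pu} => [/= ->|u s _] //=; rewrite rev_cons last_rcons.
Qed.

Section Tree.
Hypothesis tree_E : is_tree E.

Lemma tree_path_unique x y p p' :
  is_path_from E x y p -> is_path_from E x y p' -> p = p'.
Proof. by have [_] := tree_E x y; apply. Qed.

Lemma tree_path_uniq x y p : is_path_from E x y p -> uniq p.
Proof.
move=> pxy; apply: contraT => /(uniqPn x)[i [j [lt_ij lt_j eq_ij]]].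
have lt_i := ltn_trans lt_ij lt_j.
have := path_from_drop x pxy lt_i; rewrite eq_ij.
move/(tree_path_unique (path_from_drop x pxy lt_j))/(congr1 size).
rewrite !size_drop => eq_size.
by have := ltn_sub2l lt_i lt_ij; rewrite eq_size ltnn.
Qed.

Lemma tree_path_chord x y p u w : is_path_from E x y p -> u \in p -> w \in p ->
  u != w -> [set u; w] \in E -> [set u; w] \in pedges p.
Proof.
move=> pxy; wlog lt_uw : u w / (index u p < index w p)%N.
  move=> gen up wp neq_uw uwE.
  case: (ltngtP (index u p) (index w p)) => [lt_uw|lt_wu|eq_uw].
  - exact: gen.
  - by rewrite setUC; apply: gen; rewrite // 1?eq_sym // setUC.
  - by rewrite -(nth_index x up) eq_uw nth_index ?eqxx in neq_uw.
move=> up wp _ uwE; apply: contraT => uw_notin.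
have path_from_index v : v \in p -> is_path_from E v y (drop (index v p) p).
  by move=> vp; rewrite -{1}(nth_index x vp); apply: path_from_drop pxy _; rewrite index_mem.
have := path_from_cons (path_from_index w wp) uwE.
move/(_ (contra (@mem_pedges_drop _ _ _) uw_notin)).
move/(tree_path_unique (path_from_index u up)) => drop_u.
have : [set u; w] \in pedges (drop (index u p) p).
  by rewrite drop_u (drop_nth x) ?index_mem // nth_index // pedges_cons2 mem_head.
by move/mem_pedges_drop; rewrite (negPf uw_notin).
Qed.

End Tree.

End Paths.

Local Open Scope ring_scope.
Local Notation mod2 z := (z%:~R : 'F_2).

Lemma pchar_F2 : 2 \in [pchar 'F_2]. Proof. exact: pchar_Fp. Qed.

Lemma F2_eq01 (x : 'F_2) : x = (x != 0)%:R.
Proof. by case: x => [[|[|n]] ?]; apply: val_inj. Qed.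

Lemma addrr_F2 (x : 'F_2) : x + x = 0. Proof. by rewrite addrr_pchar2 // pchar_F2. Qed.

Lemma oppr_F2 (x : 'F_2) : - x = x. Proof. by rewrite oppr_pchar2 // pchar_F2. Qed.

Lemma mod2_eq0 z : (mod2 z == 0) = (2 %| z)%Z.
Proof.
have nat_eq0 n : ((n%:R : 'F_2) == 0) = (2 %| n)%N by rewrite -val_eqE /= val_Fp_nat.
by case: z => n; rewrite ?NegzE ?mulrNz ?oppr_eq0 nat_eq0.
Qed.

Lemma mod2E z : mod2 z = (~~ (2 %| z)%Z)%:R.
Proof. by rewrite [LHS]F2_eq01 mod2_eq0. Qed.

Lemma mod2_gcd a b : mod2 (gcdz a b) = mod2 a + mod2 b + mod2 a * mod2 b.
Proof.
rewrite !mod2E dvdz_gcd; case: (2 %| a)%Z; case: (2 %| b)%Z;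
  by rewrite /= ?(addr0, add0r, mulr0, mul0r, mul1r, addrr_F2).
Qed.

Lemma sum_prod_but_one_F2 (I : finType) (S : {pred I}) (q : I -> 'F_2) :
  {in S &, forall i j, q i = 0 -> q j = 0 -> i = j} ->
  \sum_(i in S) \prod_(j in S | j != i) q j = (#|S|%:R + 1) * \prod_(i in S) q i + 1.
Proof.
move=> q0_uniq; have q1 i : q i != 0 -> q i = 1 by move=> qi; rewrite [q i]F2_eq01 qi.
case: (boolP [exists i in S, q i == 0]) => [/exists_inP[i0 Si0 /eqP qi0] | /exists_inP q_nz].
  rewrite (bigD1 i0 Si0) [X in _ * X](bigD1 i0 Si0) /= qi0 mul0r mulr0 add0r.
  have -> : \prod_(j in S | j != i0) q j = 1.
    apply: big1 => j /andP[Sj ne_ji0]; apply: q1; apply: contra ne_ji0 => /eqP qj0.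
    by rewrite (q0_uniq _ _ Sj Si0 qj0 qi0).
  rewrite big1 ?addr0 // => i /andP[_ ne_ii0].
  by rewrite (bigD1 i0) /= ?qi0 ?mul0r // Si0 eq_sym.
have all1 i : i \in S -> q i = 1.
  by move=> Si; apply: q1; apply/negP => qi0; apply: q_nz; exists i.
rewrite [\prod_(i in S) q i]big1 // mulr1 (eq_bigr (fun=> 1)) => [|i _]; last first.
  by apply: big1 => j /andP[Sj _]; apply: all1.
by rewrite sumr_const -addrA addrr_F2 addr0.
Qed.

Lemma sum_offdiag_swap (V : nmodType) (I : finType) (S : {pred I}) (G : I -> I -> V) :
  \sum_(i in S) \sum_(j in S | j != i) G i j = \sum_(i in S) \sum_(j in S | j != i) G j i.
Proof.
rewrite (exchange_big_dep (mem S)) /= => [|i j _ /andP[] //].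
by apply: eq_bigr => j Sj; apply: eq_bigl => i; rewrite Sj eq_sym.
Qed.

Lemma sum_offdiag_sym (V : nmodType) (I : finType) (S : {pred I}) (G : I -> I -> V) :
  (forall i j, G i j = G j i) ->
  \sum_(i in S) \sum_(j in S | j != i) G i j =
  (\sum_(i in S) \sum_(j in S | (enum_rank i < enum_rank j)%N) G i j) *+ 2.
Proof.
move=> G_sym; rewrite mulr2n.
under eq_bigr => i _ do rewrite (bigID (fun j => enum_rank j < enum_rank i)%N) /=.
rewrite big_split /= addrC; congr (_ + _).
  apply: eq_bigr => i _; apply: eq_bigl => j; rewrite -andbA; congr (_ && _).
  case: ltngtP => [_|lt_ij|/val_inj/enum_rank_inj->]; rewrite ?andbF ?eqxx //= andbT.
  by apply: contraTneq lt_ij => ->; rewrite ltnn.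
rewrite (exchange_big_dep (mem S)) => [|i j _ /andP[/andP[]]//].
apply: eq_bigr => i Si; apply: eq_big => [j|j _]; last exact: G_sym.
rewrite [i \in S]Si /=; case: (j \in S) => //=.
by case: eqP => [->|]; rewrite ?ltnn.
Qed.

Section DecoratedTree.
Variables (T : finType) (D : dtree T) (gamma : T -> T -> seq T).
Hypothesis gammaP : forall x y : T, is_path_from (dE D) x y (gamma x y).
Local Notation E := (dE D).
Local Notation tree_E := (d_is_tree D).
Implicit Types (x y c d : T) (e : {set T}).

Lemma gamma_refl x : gamma x x = [:: x].
Proof. by apply: (tree_path_unique tree_E (gammaP x x)); rewrite /= eqxx. Qed.

Lemma gamma_head x y : gamma x y = x :: behead (gamma x y).
Proof. exact: path_from_head (gammaP x y). Qed.

Lemma mem_gamma x y : x \in gamma x y.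
Proof. by rewrite gamma_head mem_head. Qed.

Lemma gamma_next x y : x != y -> gamma x y = x :: gamma (nth x (gamma x y) 1) y.
Proof.
move=> neq_xy; have := gammaP x y; rewrite [gamma x y]gamma_head.
case: (behead _) => [/and4P[_ /eqP/= xy _ _] | z s pxy]; first by rewrite xy eqxx in neq_xy.
by rewrite /= (tree_path_unique tree_E (gammaP z y) (path_from_behead pxy)).
Qed.

Lemma gamma_sym x y : gamma y x = rev (gamma x y).
Proof. exact: (tree_path_unique tree_E (gammaP y x) (path_from_rev (gammaP x y))). Qed.

Lemma pedges_gamma_cons x y z : pedges (z :: gamma x y) = [set z; x] :: pedges (gamma x y).
Proof. by rewrite [gamma x y]gamma_head. Qed.

Lemma edgeE e a b : e \in E -> a \in e -> b \in e -> a != b -> e = [set a; b].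
Proof.
move=> eE ae be neq_ab; apply/eqP; rewrite eq_sym eqEcard (dE_two eE) cards2 neq_ab.
by rewrite andbT; apply/subsetP => z; rewrite !inE => /orP[]/eqP->.
Qed.

Lemma edge_other_end e c : e \in E -> c \in e -> exists2 d, d != c & e = [set c; d].
Proof.
move=> eE ce; have /cards2P[a [b [neq_ab e_ab]]] : #|e| == 2%N by rewrite (dE_two eE).
move: ce; rewrite e_ab !inE => /orP[]/eqP->; first by exists b; rewrite // eq_sym.
by exists a; rewrite // setUC.
Qed.

Lemma decoration_even_unique c e e' : e \in E -> e' \in E -> c \in e -> c \in e' ->
  (2 %| dq D e c)%Z -> (2 %| dq D e' c)%Z -> e = e'.
Proof.
move=> eE e'E ce ce' even_e even_e'; apply/eqP; apply: contraT => neq_ee'.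
have [cA | cV] := boolP (c \in dA D); first by rewrite d_q_arrow in even_e.
have := dvdz_gcd 2 (dq D e c) (dq D e' c).
by rewrite even_e even_e' d_q_coprime.
Qed.

Lemma qpath_cons e d p : d \notin e -> qpath D e (d :: p) = qpath D e p.
Proof.
move=> d_notin; rewrite /qpath (@eq_pick _ _ (fun u => (u \in e) && (u \in p))) // => u /=.
by rewrite in_cons; case: eqVneq => [->|] //=; rewrite (negPf d_notin).
Qed.

Lemma qpath_rev e p : qpath D e (rev p) = qpath D e p.
Proof.
by rewrite /qpath (@eq_pick _ _ (fun u => (u \in e) && (u \in p))) // => u; rewrite /= mem_rev.
Qed.

Lemma incident_rev e p : incident D e (rev p) = incident D e p.
Proof. by rewrite /incident pedges_rev mem_rev has_rev. Qed.

Section TowardArrow.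
Variable alpha : T.
Hypothesis alphaA : alpha \in dA D.
Local Notation g c := (gamma c alpha).

Definition parent c := nth c (g c) 1.
Definition children c := [set d | (d != alpha) && (parent d == c)].
Definition down_edges c := [set e in E | (c \in e) && (e \notin pedges (g c))].

Lemma gamma_parent d : d != alpha -> g d = d :: g (parent d).
Proof. exact: gamma_next. Qed.

Lemma parent_edge c : c != alpha -> [set c; parent c] \in E.
Proof.
move=> neq_ca; apply: path_from_edge (gammaP c alpha) _.
by rewrite gamma_parent // pedges_gamma_cons mem_head.
Qed.

Lemma child_edge c d : d \in children c ->
  [/\ g d = d :: g c, d \notin g c & [set d; c] \in down_edges c].
Proof.
rewrite inE => /andP[neq_da /eqP <-]; have g_d := gamma_parent neq_da.
have pd : is_path_from E d alpha (d :: g (parent d)) by rewrite -g_d.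
have /andP[d_notin _] := tree_path_uniq tree_E pd.
have := path_from_uniq_edges pd; rewrite pedges_gamma_cons => /andP[dp_notin _].
by split=> //; rewrite !inE eqxx orbT dp_notin parent_edge.
Qed.

Lemma down_edges_children c : [set [set d; c] | d in children c] = down_edges c.
Proof.
apply/setP => e; apply/imsetP/idP => [[d dc ->] | ]; first by case: (child_edge dc).
rewrite inE => /andP[eE /andP[ce e_notin]].
have [d neq_dc e_cd] := edge_other_end eE ce.
have pd : is_path_from E d alpha (d :: g c).
  by apply: path_from_cons (gammaP c alpha) _ _; rewrite setUC -e_cd.
have g_d := tree_path_unique tree_E (gammaP d alpha) pd.
exists d; last by rewrite e_cd setUC.
rewrite inE /parent g_d [g c]gamma_head eqxx andbT.
by apply/eqP => da; move: g_d; rewrite da gamma_refl [g c]gamma_head.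
Qed.

Lemma valency_split c : valency E c = (#|down_edges c| + (c != alpha))%N.
Proof.
rewrite /valency -(cardsID [set e | e \in pedges (g c)]) addnC; congr (_ + _)%N.
  by apply: eq_card => e; rewrite !inE andbC -andbA.
have [->|neq_ca] := eqVneq c alpha.
  by rewrite gamma_refl; apply/eqP; rewrite cards_eq0; apply/eqP/setP => e; rewrite !inE andbF.
have g_c := gamma_parent neq_ca.
have /andP[c_notin _] : uniq (c :: g (parent c)).
  by rewrite -g_c (tree_path_uniq tree_E (gammaP c alpha)).
rewrite (_ : _ :&: _ = [set [set c; parent c]]) ?cards1 //.
apply/setP => e; rewrite !inE g_c pedges_gamma_cons inE.
have [->|neq_e] := eqVneq e [set c; parent c]; first by rewrite parent_edge // !inE eqxx.
apply/negbTE; apply: contra c_notin => /andP[/andP[_ ce] /pedges_sub]; exact.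
Qed.

Lemma incident_start c e : c \in e ->
  incident D e (g c) = (e \in E) && (e \notin pedges (g c)).
Proof.
move=> ce; rewrite /incident; have -> : has (fun u => u \in e) (g c).
  by apply/hasP; exists c; rewrite ?mem_gamma.
by rewrite andbT.
Qed.

Lemma qpath_start c e : e \in down_edges c -> qpath D e (g c) = dq D e c.
Proof.
rewrite inE => /andP[eE /andP[ce e_notin]].
rewrite /qpath; case: pickP => [u /andP[ue ug] | /(_ c)]; last by rewrite ce mem_gamma.
have [-> // | neq_uc] := eqVneq u c.
have := tree_path_chord tree_E (gammaP c alpha) ug (mem_gamma c alpha) neq_uc.
by rewrite -(edgeE eE ue ce neq_uc) eE (negPf e_notin) => /(_ isT).
Qed.

Lemma prod_qpath_split c (P : pred {set T}) :
  \prod_(e in E | P e && incident D e (g c)) qpath D e (g c) =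
  \prod_(e in E | P e && incident D e (g c) && (c \notin e)) qpath D e (g c) *
  \prod_(e | P e && (e \in down_edges c)) dq D e c.
Proof.
rewrite (bigID (fun e => c \in e)) [RHS]mulrC /=; congr (_ * _); last first.
  by apply: eq_bigl => e; rewrite !andbA.
rewrite [RHS](eq_bigr (fun e => qpath D e (g c))) => [|e /andP[_ /qpath_start] //].
apply: eq_bigl => e; rewrite inE; case: (boolP (c \in e)) => ce; rewrite ?andbF //= andbT.
by rewrite incident_start //; case: (e \in E); case: (P e).
Qed.

Lemma xva_split c :
  xva D gamma c alpha = xhat D gamma c alpha * \prod_(e in down_edges c) dq D e c.
Proof. by rewrite /xva /xhat -mulrA (prod_qpath_split c predT). Qed.

Lemma incident_child c d e : d \in children c -> e \in E ->
  incident D e (d :: g c) && (d \notin e) = (e != [set d; c]) && incident D e (g c).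
Proof.
move=> dc eE; have [g_d d_notin _] := child_edge dc.
rewrite /incident pedges_gamma_cons inE eE /=.
have [de | d_notin_e] /= := boolP (d \in e); last first.
  by rewrite andbT; case: (e == _); case: (e \in pedges _); case: has.
rewrite andbF; apply/esym/negbTE; apply/negP => /andP[neq_e /andP[e_notin /hasP[u ug ue]]].
have neq_du : d != u by apply: contraNneq d_notin => ->.
have ug_d : u \in g d by rewrite g_d in_cons ug orbT.
have := tree_path_chord tree_E (gammaP d alpha) (mem_gamma d alpha) ug_d neq_du.
rewrite -(edgeE eE de ue neq_du) eE g_d pedges_gamma_cons inE (negPf neq_e) (negPf e_notin).
by move/(_ isT).
Qed.

Lemma xhat_child c d : d \in children c ->
  xhat D gamma d alpha =
  xhat D gamma c alpha * \prod_(e in down_edges c | e != [set d; c]) dq D e c.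
Proof.
move=> dc; have [g_d _ _] := child_edge dc.
rewrite /xhat g_d -mulrA; congr (_ * _).
rewrite (eq_big (fun e => (e \in E) && ((e != [set d; c]) && incident D e (g c)))
  (fun e => qpath D e (g c))) => [|e|e /and3P[_ _ d_notin]]; last exact: qpath_cons.
- rewrite prod_qpath_split; congr (_ * _).
    apply: eq_bigl => e; case: (boolP (c \in e)) => ce; rewrite ?andbF //= andbT.
    have -> /= : e != [set d; c] by apply: contraNneq ce => ->; rewrite !inE eqxx orbT.
    by rewrite andbT.
  exact: big_andbC.
- by case: (boolP (e \in E)) => // eE; rewrite incident_child.
Qed.

Lemma valency_xva_children_mod2 c :
  mod2 (delta D c) * mod2 (xva D gamma c alpha) +
  \sum_(d in children c) mod2 (xhat D gamma d alpha) =
  (c != alpha)%:R * mod2 (xhat D gamma c alpha).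
Proof.
set X := mod2 (xhat D gamma c alpha); set P := \prod_(e in down_edges c) mod2 (dq D e c).
have -> : \sum_(d in children c) mod2 (xhat D gamma d alpha) =
    X * \sum_(e in down_edges c) \prod_(e' in down_edges c | e' != e) mod2 (dq D e' c).
  rewrite big_distrr -{1}down_edges_children big_imset => [|d1 d2 d1c _ /setP/(_ d1)].
    by apply: eq_bigr => d dc; rewrite (xhat_child dc) rmorphM rmorph_prod.
  rewrite !inE eqxx /= => /esym/orP[/eqP // | /eqP d1_c].
  by have [_ + _] := child_edge d1c; rewrite d1_c mem_gamma.
rewrite sum_prod_but_one_F2; last first.
  move=> e e' /setIdP[eE /andP[ce _]] /setIdP[e'E /andP[ce' _]] q0 q0'.
  by apply: (decoration_even_unique eE e'E ce ce'); rewrite -mod2_eq0 ?q0 ?q0'.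
have -> : mod2 (delta D c) = (#|down_edges c| + (c != alpha))%:R.
  by rewrite /delta valency_split.
rewrite xva_split rmorphM rmorph_prod /= -/X -/P natrD.
rewrite mulrDr mulr1 [X * (_ * P)]mulrCA addrA -mulrDl addrACA addrr_F2 add0r.
case: eqVneq => [c_alpha|_] /=; last by rewrite addrr_F2 mul0r add0r mul1r.
have cA : c \in dA D by rewrite c_alpha.
have -> : P = 1 by apply: big1 => e /setIdP[eE /andP[ce _]]; rewrite d_q_arrow.
by rewrite add0r mul1r mulr1 mul0r addrr_F2.
Qed.

Lemma sum_valency_xva_mod2 : \sum_c mod2 (delta D c) * mod2 (xva D gamma c alpha) = 0.
Proof.
have : \sum_c (mod2 (delta D c) * mod2 (xva D gamma c alpha) +
    \sum_(d in children c) mod2 (xhat D gamma d alpha)) =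
    \sum_c (c != alpha)%:R * mod2 (xhat D gamma c alpha).
  by apply: eq_bigr => c _; apply: valency_xva_children_mod2.
rewrite big_split /=.
have -> : \sum_c \sum_(d in children c) mod2 (xhat D gamma d alpha) =
    \sum_(d | d != alpha) mod2 (xhat D gamma d alpha).
  rewrite [RHS](partition_big parent xpredT) //.
  by apply: eq_bigr => c _; apply: eq_bigl => d; rewrite inE.
have -> : \sum_c (c != alpha)%:R * mod2 (xhat D gamma c alpha) =
    \sum_(d | d != alpha) mod2 (xhat D gamma d alpha).
  by rewrite [RHS]big_mkcond; apply: eq_bigr => c _; rewrite mulr_natl mulrb.
by rewrite -[RHS]add0r => /addIr.
Qed.

End TowardArrow.

Lemma arrow_edgeE a e : a \in dA D -> e \in E -> a \in e -> arrow_edge D a = e.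
Proof.
move=> aA eE ae; have /eqP/cards1P[e0 edges_a] := d_arrow_leaf aA.
have edge_at_a e' : e' \in E -> a \in e' -> e' = e0.
  by move=> e'E ae'; apply/set1P; rewrite -edges_a inE e'E ae'.
rewrite /arrow_edge; case: pickP => [e' /andP[e'E ae'] | /(_ e)]; last by rewrite eE ae.
by rewrite (edge_at_a e' e'E ae') (edge_at_a e eE ae).
Qed.

Lemma gamma_from_arrow a b : a \in dA D -> a != b ->
  exists2 z, gamma a b = a :: gamma z b & arrow_edge D a = [set a; z].
Proof.
move=> aA /gamma_next; move: (nth a _ 1) => z g_ab; exists z => //.
apply: arrow_edgeE aA _ _; last by rewrite !inE eqxx.
by apply: path_from_edge (gammaP a b) _; rewrite g_ab pedges_gamma_cons mem_head.
Qed.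

Lemma pue_arrow_edge a : a \in dA D ->
  pue D gamma a (arrow_edge D a) = \sum_(b in dA1 D | b != a) xva D gamma a b.
Proof.
move=> aA; apply: eq_big => [b|b /andP[_]].
  have [<-|neq_ab] := eqVneq a b; first by rewrite gamma_refl andbF.
  have [z g_ab e_a] := gamma_from_arrow aA neq_ab.
  by rewrite e_a g_ab pedges_gamma_cons mem_head andbT.
have [<-|neq_ab] := eqVneq a b; first by rewrite gamma_refl.
have [z g_ab e_a] := gamma_from_arrow aA neq_ab => _.
rewrite /xhat /xva; congr (_ * _); apply: eq_bigl => e.
case: (boolP (a \in e)) => ae; rewrite ?andbT // !andbF.
apply/esym/negbTE/negP => /andP[eE /andP[/andP[_]]].
by rewrite -(arrow_edgeE aA eE ae) e_a g_ab pedges_gamma_cons mem_head.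
Qed.

Lemma xva_refl_arrow a : a \in dA D -> xva D gamma a a = df D a.
Proof.
move=> aA; rewrite /xva gamma_refl big1 ?mulr1 // => e /andP[eE /andP[_ /hasP[u]]].
rewrite inE => /eqP-> ae; rewrite /qpath; case: pickP => [v /andP[_]|/(_ a)].
  by rewrite inE => /eqP->; apply: d_q_arrow.
by rewrite ae mem_head.
Qed.

Lemma delta_arrow a : a \in dA D -> delta D a = 1.
Proof. by move=> aA; rewrite /delta d_arrow_leaf. Qed.

Lemma f_mul_xva_sym a b : df D a * xva D gamma a b = df D b * xva D gamma b a.
Proof.
rewrite /xva [gamma b a]gamma_sym mulrCA; congr (_ * (_ * _)).
by apply: eq_big => e; rewrite ?incident_rev // => _; rewrite qpath_rev.
Qed.

Lemma mod2_Minv : mod2 (Minv D gamma) =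
  \sum_(a in dA1 D) \sum_(v | v \notin dA1 D) mod2 (delta D v) * mod2 (xva D gamma v a).
Proof.
have VA0 : dV D :|: dA0 D = ~: dA1 D.
  by apply/setP => v; rewrite !inE; case: (v \in dA D); case: (df D v == 0).
(* Stated for any even [w]: the literal [2] inside [Minv] does not match
     syntactically a [2] elaborated here. *)
have mod2_sub_even z w : (2 %| w)%Z -> mod2 (z - w) = mod2 z.
  by rewrite -mod2_eq0 intrD intrN => /eqP->; rewrite subr0.
rewrite /Minv /Nv rmorphN oppr_F2 VA0 rmorph_sum /=.
under eq_bigr do rewrite intrM mod2_sub_even // rmorph_sum big_distrl /=.
rewrite exchange_big; apply: eq_bigr => a _.
by apply: eq_big => [v|v _]; rewrite ?in_setC // mulrC.
Qed.

Lemma dA1_arrow a : a \in dA1 D -> a \in dA D.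
Proof. by rewrite inE => /andP[]. Qed.

Lemma mod2_Finv : mod2 (Finv D gamma) = \sum_(a in dA1 D)
  (mod2 (df D a) + \sum_(b in dA1 D | b != a) mod2 (xva D gamma a b) +
   mod2 (df D a) * \sum_(b in dA1 D | b != a) mod2 (xva D gamma a b)).
Proof.
rewrite /Finv rmorph_sum /=; apply: eq_bigr => a /dA1_arrow aA.
by rewrite /Falpha mod2_gcd pue_arrow_edge // rmorph_sum /=.
Qed.

Lemma sum_valency_xva_arrow_mod2 a : a \in dA1 D ->
  \sum_(v | v \notin dA1 D) mod2 (delta D v) * mod2 (xva D gamma v a) +
  \sum_(b in dA1 D | b != a) mod2 (xva D gamma b a) = mod2 (df D a).
Proof.
move=> aA1; have aA := dA1_arrow aA1; have := sum_valency_xva_mod2 aA.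
rewrite (bigID (fun c => c \in dA1 D)) /= (bigD1 a aA1) /=.
rewrite delta_arrow // xva_refl_arrow // rmorph1 mul1r.
rewrite (eq_bigr (fun b => mod2 (xva D gamma b a))) => [|b /andP[/dA1_arrow bA _]]; last first.
  by rewrite delta_arrow // rmorph1 mul1r.
by move=> sum0; rewrite -[RHS]addr0 -[X in _ = _ + X]sum0 !addrA addrr_F2 add0r addrC.
Qed.

Lemma sum_df_mul_xva_offdiag_mod2 :
  \sum_(a in dA1 D) mod2 (df D a) * \sum_(b in dA1 D | b != a) mod2 (xva D gamma a b) = 0.
Proof.
under eq_bigr do rewrite big_distrr /=.
rewrite sum_offdiag_sym => [|a b]; first by rewrite mulrn_pchar // pchar_F2.
by rewrite -!intrM f_mul_xva_sym.
Qed.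

End DecoratedTree.

Theorem theorem3p1 (T : finType) (D : dtree T) (gamma : T -> T -> seq T)
  (hgamma : forall x y : T, is_path_from (dE D) x y (gamma x y)) :
  (2 %| Minv D gamma + Finv D gamma)%Z.
Proof.
rewrite -mod2_eq0 rmorphD /= mod2_Minv (mod2_Finv hgamma) !big_split /=; apply/eqP.
rewrite (sum_df_mul_xva_offdiag_mod2 hgamma) addr0 sum_offdiag_swap addrCA -big_split /=.
by rewrite (eq_bigr _ (sum_valency_xva_arrow_mod2 hgamma)) addrr_F2.
Qed.
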